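(* Let $F_2$ be the free group on $\{x,y\}$, $\sigma = (\{x\}, y)$, $\tau = (\{y\}, x)$, and let $u, v \in F_2$. Let $m$ be a positive integer and let $\Lambda$ be the set of all chains of the form $\tau^{m_k}\sigma^{l_k} \cdots \tau^{m_1}\sigma^{l_1}$ or $\tau^{-m_k}\sigma^{-l_k} \cdots \tau^{-m_1}\sigma^{-l_1}$ ($k \in \mathbb{N}$, all $l_i, m_i \ge 0$) of length $\sum_{i=1}^k (l_i+m_i) \le m$. Suppose that $\|\psi(u)\| = \|\psi(v)\|$ for every $\psi \in \Lambda$. Then $n([\psi(u)]; x) = n([\psi(v)]; x)$ and $n([\psi(u)]; y) = n([\psi(v)]; y)$ for every $\psi \in \Lambda$.
   Context: $\sigma$ is the automorphism with $\sigma(x) = xy$, $\sigma(y) = y$; $\tau$ is the automorphism with $\tau(y) = yx$, $\tau(x) = x$. For $w \in F_2$, $[w]$ denotes the cyclic word associated with $w$ (the set of cyclic permutations of a cyclically reduced word conjugate to $w$), and $\|w\|$ is its length. For a cyclic word $w$ and a letter $a \in \{x^{\pm1},y^{\pm1}\}$, $n(w;a)$ denotes the total number of occurrences of $a$ and $a^{-1}$ in $w$. *)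

From mathcomp Require Import all_boot.
Set Implicit Arguments. Unset Strict Implicit. Unset Printing Implicit Defensive.

Definition gen := bool.
Definition gx : gen := false.
Definition gy : gen := true.

(* A letter (g, e): the generator g if e = false, its inverse g^-1 if e = true. *)
Definition letter := (gen * bool)%type.
Definition word := seq letter.

Definition linv (a : letter) : letter := (a.1, ~~ a.2).
Definition winv (w : word) : word := rev (map linv w).

Definition reduce (w : word) : word :=
  foldr (fun a acc => match acc with
                      | b :: t => if b == linv a then t else a :: acc
                      | [::] => [:: a]
                      end) [::] w.

Fixpoint cyc_red_aux (n : nat) (w : word) : word :=
  match n with
  | 0 => w
  | n'.+1 => match w with
             | a :: t => if (0 < size t) && (last a t == linv a)
                         then cyc_red_aux n' (take (size t).-1 t)
                         else w
             | [::] => w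
             end
  end.

Definition cyc_red (w : word) : word := cyc_red_aux (size w) (reduce w).

Definition cnorm (w : word) : nat := size (cyc_red w).

Definition nocc (w : word) (g : gen) : nat := count (fun a => a.1 == g) (cyc_red w).

Definition subst (f : gen -> word) (w : word) : word :=
  reduce (flatten (map (fun a => if a.2 then winv (f a.1) else f a.1) w)).

Definition lx : letter := (gx, false).
Definition ly : letter := (gy, false).
Definition lxi : letter := (gx, true).
Definition lyi : letter := (gy, true).

(* sigma: x -> xy, y -> y ;  tau: y -> yx, x -> x ; and their inverses. *)
Definition sigma_im (g : gen) : word := if g then [:: ly] else [:: lx; ly].
Definition sigmainv_im (g : gen) : word := if g then [:: ly] else [:: lx; lyi].
Definition tau_im (g : gen) : word := if g then [:: ly; lx] else [:: lx].
Definition tauinv_im (g : gen) : word := if g then [:: ly; lxi] else [:: lx].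

(* A chain is given by a sign and the list [:: (l_1, m_1); ...; (l_k, m_k)].
   Positive sign: tau^{m_k} sigma^{l_k} ... tau^{m_1} sigma^{l_1};
   negative sign: tau^{-m_k} sigma^{-l_k} ... tau^{-m_1} sigma^{-l_1}.
   (Composition of maps: sigma^{l_1} is applied first.) *)
Definition apply_chain (neg : bool) (c : seq (nat * nat)) (u : word) : word :=
  let s := if neg then sigmainv_im else sigma_im in
  let t := if neg then tauinv_im else tau_im in
  foldl (fun w p => iter p.2 (subst t) (iter p.1 (subst s) w)) (reduce u) c.

Definition chain_len (c : seq (nat * nat)) : nat := sumn (map (fun p => p.1 + p.2) c).

(* sigma^{+-1} and tau^{+-1} are the transvections x |-> x y^{+-1} and y |-> y x^{+-1}.
   Applied to a cyclically reduced word c, such a transvection inserts one letter per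
   occurrence of the moved generator, deletes two letters per adjacent pair of c whose
   images cancel, and leaves the number of occurrences of the moved generator unchanged.
   The cancelling pairs of sigma and tau coincide (x y^-1 and y x^-1); those of sigma^-1
   (x y, y^-1 x^-1) and tau^-1 (y x, x^-1 y^-1) are equinumerous around any cycle, their
   difference along a path being a telescoping potential. Hence, with n_x, n_y the
   occurrence counts in [w],
     ||sigma^{+-1} w|| + n_y = ||tau^{+-1} w|| + n_x   and   n_x + n_y = ||w||,
   so the lengths of w, sigma^{+-1} w and tau^{+-1} w determine n_x and n_y; this settles
   the empty chain, using chains of length 1 (whence m > 0). Along a chain, a sigma-step
   keeps n_x, a tau-step keeps n_y, and the other count is the length minus the kept one. *)

From mathcomp Require Import all_boot zify.
Set Implicit Arguments. Unset Strict Implicit. Unset Printing Implicit Defensive.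

(** * Free reduction *)

Lemma linvK : involutive linv.
Proof. by case=> a e; rewrite /linv /= negbK. Qed.

Lemma linv_inj : injective linv.
Proof. exact: inv_inj linvK. Qed.

Lemma linv_neq (a : letter) : (a == linv a) = false.
Proof. by case: a => [[] []]. Qed.

Definition nocancel (a b : letter) : bool := b != linv a.
Definition reduced (s : word) : bool := sorted nocancel s.
Definition cyclically_reduced (c : word) : bool := cycle nocancel c.

Lemma nocancel_linv a b : nocancel b (linv a) = (b != a).
Proof. by rewrite /nocancel (inj_eq linv_inj) eq_sym. Qed.

Definition push (a : letter) (s : word) : word :=
  if s is b :: t then (if b == linv a then t else a :: s) else [:: a].

Lemma reduce_cons a w : reduce (a :: w) = push a (reduce w).
Proof. by []. Qed.

Lemma reduce_cat u v : reduce (u ++ v) = foldr push (reduce v) u.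
Proof. by rewrite /reduce foldr_cat. Qed.

Lemma reduced_push a s : reduced s -> reduced (push a s).
Proof.
case: s => [|b t] //= rs; case: ifP => [_ | ba]; first exact: path_sorted rs.
by rewrite /= /nocancel ba rs.
Qed.

Lemma reduced_reduce w : reduced (reduce w).
Proof. by elim: w => //= a w IH; apply: reduced_push. Qed.

Lemma reduce_id s : reduced s -> reduce s = s.
Proof.
elim: s => //= a s IH rs; rewrite IH; last exact: path_sorted rs.
by case: s rs {IH} => //= b t /andP[ab _]; rewrite ifN.
Qed.

Lemma reduceK w : reduce (reduce w) = reduce w.
Proof. exact/reduce_id/reduced_reduce. Qed.

Lemma push_linvK a s : reduced s -> push a (push (linv a) s) = s.
Proof.
case: s => [|b t] /=; first by rewrite eqxx.
rewrite linvK; case: eqP => [-> | _] rs; last by rewrite /= eqxx.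
by case: t rs => [|c t] //= /andP[bc _]; rewrite ifN.
Qed.

Lemma reduce_push_cat a s v : reduced s ->
  reduce (push a s ++ v) = push a (reduce (s ++ v)).
Proof.
case: s => [|b t] // rs; rewrite {1}/push; case: eqP => [ba|_] //.
by rewrite cat_cons reduce_cons ba push_linvK // reduced_reduce.
Qed.

Lemma reduce_reducel u v : reduce (reduce u ++ v) = reduce (u ++ v).
Proof. by elim: u => //= a u IH; rewrite reduce_push_cat ?reduced_reduce // IH. Qed.

Lemma reduce_reducer u v : reduce (u ++ reduce v) = reduce (u ++ v).
Proof. by rewrite !reduce_cat reduceK. Qed.

Lemma reduce_cat_congr u u' v v' : reduce u = reduce u' -> reduce v = reduce v' ->
  reduce (u ++ v) = reduce (u' ++ v').
Proof.
by move=> eu ev; rewrite -reduce_reducel eu reduce_reducel -reduce_reducer ev reduce_reducer.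
Qed.

Lemma reduce_cons_congr a w w' : reduce w = reduce w' -> reduce (a :: w) = reduce (a :: w').
Proof. by rewrite !reduce_cons => ->. Qed.

Lemma winv_cons a w : winv (a :: w) = rcons (winv w) (linv a).
Proof. by rewrite /winv /= rev_cons. Qed.

Lemma winv_cat u v : winv (u ++ v) = winv v ++ winv u.
Proof. by rewrite /winv map_cat rev_cat. Qed.

Lemma reduce_cat_winv w : reduce (w ++ winv w) = [::].
Proof.
elim: w => // a w IH.
rewrite winv_cons -cats1 cat_cons catA reduce_cons -reduce_reducel IH /=.
by rewrite eqxx.
Qed.

Lemma reduce_cancel_mid u w v : reduce (u ++ w ++ winv w ++ v) = reduce (u ++ v).
Proof. by apply: reduce_cat_congr => //; rewrite catA -reduce_reducel reduce_cat_winv. Qed.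

Lemma reduce_cancel2 a b w : b = linv a -> reduce (a :: b :: w) = reduce w.
Proof. by move=> ->; apply: (reduce_cancel_mid [::] [:: a]). Qed.

Lemma size_reduce w : size (reduce w) <= size w.
Proof.
elim: w => //= a w IH; rewrite /push.
by case: (reduce w) IH => //= b t; case: ifP => //= _ /leqW/leqW.
Qed.

(** * Cyclic reduction *)

Lemma cyclically_reduced_cons a t :
  cyclically_reduced (a :: t) = path nocancel a t && (a != linv (last a t)).
Proof. by rewrite /cyclically_reduced /= rcons_path. Qed.

Lemma cyclically_reduced_reduced c : cyclically_reduced c -> reduced c.
Proof. by case: c => //= a t; rewrite rcons_path => /andP[]. Qed.

Lemma cyc_red_aux_id n c : cyclically_reduced c -> cyc_red_aux n c = c.
Proof.
case: n c => [|n] [|a t] //; rewrite cyclically_reduced_cons => /andP[_ ta] /=.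
by case: ifP => // /andP[_ /eqP ta']; rewrite ta' linvK eqxx in ta.
Qed.

Lemma cyc_red_aux_conj n p c : cyclically_reduced c -> size p <= n ->
  cyc_red_aux n (p ++ c ++ winv p) = c.
Proof.
elim: p n => [|q p IH] n cc pn; first by rewrite cats0 cyc_red_aux_id.
case: n pn => // n pn; rewrite winv_cons cat_cons -!rcons_cat /=.
by rewrite size_rcons last_rcons eqxx /= -cats1 take_size_cat // IH.
Qed.

Lemma cyc_red_aux_spec n r : reduced r -> size r <= n ->
  exists2 p, r = p ++ cyc_red_aux n r ++ winv p & cyclically_reduced (cyc_red_aux n r).
Proof.
elim: n r => [|n IH] [|a t] rr //= rn; try by exists [::].
case: ifP => [/andP[t_gt0 /eqP ta] | ta].
  case/lastP: t rr rn t_gt0 ta => // s z rr rn _; rewrite last_rcons => za.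
  rewrite size_rcons -cats1 take_size_cat //.
  have rs : reduced s by move: rr; rewrite /reduced /= -cats1 cat_path => /andP[/path_sorted].
  have [|p es cc] := IH s rs; first by move: rn; rewrite size_rcons ltnS => /ltnW.
  by exists (a :: p) => //; rewrite winv_cons -!cats1 za {1}es /= -!catA.
exists [::]; first by rewrite cats0.
rewrite cyclically_reduced_cons; apply/andP; split; first exact: rr.
case: t ta {rr rn} => [|b t] ta; first by rewrite linv_neq.
by apply: contraFN ta => /eqP ->; rewrite /= linvK eqxx.
Qed.

Lemma cyc_red_char w p c :
  reduce w = p ++ c ++ winv p -> cyclically_reduced c -> cyc_red w = c.
Proof.
move=> ew cc; rewrite /cyc_red ew cyc_red_aux_conj //.
by apply: leq_trans (size_reduce w); rewrite ew size_cat leq_addr.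
Qed.

Lemma cyc_red_spec w :
  exists2 p, reduce w = p ++ cyc_red w ++ winv p & cyclically_reduced (cyc_red w).
Proof. exact: cyc_red_aux_spec (reduced_reduce w) (size_reduce w). Qed.

Lemma cyc_red_congr w w' : reduce w = reduce w' -> cyc_red w = cyc_red w'.
Proof.
by move=> ew; have [p ew' cc] := cyc_red_spec w'; apply: (@cyc_red_char w p _ _ cc); rewrite ew.
Qed.

Lemma cyc_red_reduce w : cyc_red (reduce w) = cyc_red w.
Proof. exact/cyc_red_congr/reduceK. Qed.

Lemma cyc_red_cyclic w c : reduce w = c -> cyclically_reduced c -> cyc_red w = c.
Proof. by move=> ew; apply: (@cyc_red_char _ [::]); rewrite cats0. Qed.

Lemma reduced_conj1 a b s : path nocancel b s -> b != linv a -> last b s != a ->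
  reduced (a :: (b :: s) ++ [:: linv a]).
Proof.
move=> bs ba sa; rewrite /reduced /= cat_path bs /= nocancel_linv sa andbT.
by rewrite /nocancel ba.
Qed.

(* Only the length and the letter counts of a cyclic reduction matter below, so its
   invariance under conjugation is stated up to permutation rather than rotation. *)
Lemma perm_cyc_red_conj1_cyclic a c : cyclically_reduced c ->
  perm_eq (cyc_red (a :: c ++ [:: linv a])) c.
Proof.
case: c => [_|z t cc]; first by rewrite (@cyc_red_cyclic _ [::]) //= eqxx.
have [za|za] := eqVneq z (linv a).
  have rc : cyclically_reduced (rot 1 (z :: t)) by rewrite /cyclically_reduced rot_cycle.
  suff -> : cyc_red (a :: (z :: t) ++ [:: linv a]) = rot 1 (z :: t) by rewrite perm_rot.
  apply: (cyc_red_cyclic _ rc); rewrite za rot1_cons cat_cons reduce_cancel2 //.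
  by rewrite cats1 reduce_id // -za -rot1_cons cyclically_reduced_reduced.
have [ta|ta] := eqVneq (last z t) a.
  have rc : cyclically_reduced (rotr 1 (z :: t)) by rewrite /cyclically_reduced rotr_cycle.
  suff -> : cyc_red (a :: (z :: t) ++ [:: linv a]) = rotr 1 (z :: t) by rewrite perm_rotr.
  apply: (cyc_red_cyclic _ rc); have ec : z :: t = rcons (belast z t) a by rewrite lastI ta.
  move: rc; rewrite ec rotr1_rcons => /cyclically_reduced_reduced rc.
  rewrite -cats1 -catA -cat_cons -(cats0 [:: linv a]).
  by rewrite (reduce_cancel_mid _ [:: a] [::]) cats0 reduce_id.
rewrite (@cyc_red_char _ [:: a] (z :: t)) //.
by rewrite reduce_id // reduced_conj1 //; move: cc; rewrite cyclically_reduced_cons => /andP[].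
Qed.

Lemma perm_cyc_red_conj1 a w : perm_eq (cyc_red (a :: w ++ [:: linv a])) (cyc_red w).
Proof.
have [p ew cc] := cyc_red_spec w; set c := cyc_red w in ew cc *.
have rw : reduced (p ++ c ++ winv p) by rewrite -ew reduced_reduce.
have -> : cyc_red (a :: w ++ [:: linv a]) = cyc_red (a :: (p ++ c ++ winv p) ++ [:: linv a]).
  by apply/cyc_red_congr/reduce_cons_congr/reduce_cat_congr; rewrite // ew reduce_id.
case: p rw {ew} => [|q p] rw; first by rewrite cats0 perm_cyc_red_conj1_cyclic.
rewrite winv_cons in rw *.
have [qa|qa] := eqVneq q (linv a).
  have rpcp : reduced (p ++ c ++ winv p).
    by move: rw; rewrite /reduced cat_cons -!rcons_cat /= rcons_path => /andP[/path_sorted].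
  have -> : a :: ((q :: p) ++ c ++ rcons (winv p) (linv q)) ++ [:: linv a]
          = [::] ++ [:: a] ++ winv [:: a] ++ ((p ++ c ++ winv p) ++ [:: a] ++ winv [:: a] ++ [::]).
    by rewrite qa linvK -cats1 /= -!catA.
  by rewrite (@cyc_red_char _ p c) // !reduce_cancel_mid cats0 reduce_id.
have rq : reduced (a :: ((q :: p) ++ c ++ rcons (winv p) (linv q)) ++ [:: linv a]).
  apply: reduced_conj1 => //; rewrite !last_cat last_rcons.
  by apply: contra qa => /eqP <-; rewrite linvK.
by rewrite (@cyc_red_char _ (a :: q :: p) c) // reduce_id // !winv_cons -!cats1 -!catA.
Qed.

Lemma perm_cyc_red_conj p w : perm_eq (cyc_red (p ++ w ++ winv p)) (cyc_red w).
Proof.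
elim: p => [|a p IH]; first by rewrite cats0.
rewrite winv_cons -cats1 cat_cons !catA -(catA p).
exact: perm_trans (perm_cyc_red_conj1 _ _) IH.
Qed.

Lemma seq_ind2 (T : Type) (P : seq T -> Prop) :
  P [::] -> (forall a, P [:: a]) -> (forall a b t, P t -> P (b :: t) -> P (a :: b :: t)) ->
  forall s, P s.
Proof.
move=> P0 P1 P2 s; suff [] : P s /\ forall a, P (a :: s) by [].
by elim: s => [|b t [Pt Pbt]]; split => // a; apply: P2.
Qed.

Fixpoint npairs (P : rel letter) (a : letter) (s : word) : nat :=
  if s is b :: s' then P a b + npairs P b s' else 0.
Definition npairs_seq (P : rel letter) (c : word) : nat :=
  if c is a :: s then npairs P a s else 0.
Definition npairs_cycle (P : rel letter) (c : word) : nat :=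
  if c is a :: s then npairs P a (rcons s a) else 0.

Lemma npairs_cat P a s1 s2 : npairs P a (s1 ++ s2) = npairs P a s1 + npairs P (last a s1) s2.
Proof. by elim: s1 a => [|b s IH] a //=; rewrite IH addnA. Qed.

Lemma npairs_cycle_cons P a s : npairs_cycle P (a :: s) = npairs P a s + P (last a s) a.
Proof. by rewrite /= -cats1 npairs_cat /= addn0. Qed.

Lemma npairs_cycle_rot1 P c : npairs_cycle P (rot 1 c) = npairs_cycle P c.
Proof.
case: c => [|a [|b s]] //.
by rewrite rot1_cons -cats1 cat_cons !npairs_cycle_cons npairs_cat last_cat /=; lia.
Qed.

Lemma npairs_cycle_rot P k c : npairs_cycle P (rot k c) = npairs_cycle P c.
Proof.
elim: k => [|k IH]; first by rewrite rot0.
case: (ltnP k (size c)) => kc; last by rewrite !rot_oversize // ltnW.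
by rewrite rotS // npairs_cycle_rot1.
Qed.

Lemma eq_npairs P Q a s : P =2 Q -> npairs P a s = npairs Q a s.
Proof. by move=> ePQ; elim: s a => //= b s IH a; rewrite ePQ IH. Qed.

(** * Transvections *)

Definition is_gen (g : gen) : pred letter := fun a => a.1 == g.

(* [tv g e] fixes the other generator and sends g to g (~~ g)^{+1} if e = false and to
   g (~~ g)^{-1} if e = true: sigma^{+-1} = tv gx and tau^{+-1} = tv gy. *)
Definition tv_letter (g : gen) (e : bool) (a : letter) : word :=
  if a.1 == g then (if a.2 then [:: (~~ g, ~~ e); a] else [:: a; (~~ g, e)]) else [:: a].

Definition tv (g : gen) (e : bool) (w : word) : word := flatten (map (tv_letter g e) w).

(* The adjacent pairs of a reduced word at which its image under [tv g e] cancels;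
   exactly one pair of letters cancels at each of them. *)
Definition tv_cancels (g : gen) (e : bool) (a b : letter) : bool :=
  (a == (g, false)) && (b == (~~ g, ~~ e)) || (a == (~~ g, e)) && (b == (g, true)).

Definition sigma_pm (neg : bool) : word -> word :=
  subst (if neg then sigmainv_im else sigma_im).
Definition tau_pm (neg : bool) : word -> word :=
  subst (if neg then tauinv_im else tau_im).

Lemma sigma_pmE neg w : sigma_pm neg w = reduce (tv gx neg w).
Proof.
rewrite /sigma_pm /subst /tv; congr (reduce (flatten _)).
by apply: eq_map; case: neg => -[[] []].
Qed.

Lemma tau_pmE neg w : tau_pm neg w = reduce (tv gy neg w).
Proof.
rewrite /tau_pm /subst /tv; congr (reduce (flatten _)).
by apply: eq_map; case: neg => -[[] []].
Qed.

Section Transvection.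

Variables (g : gen) (e : bool).

Lemma tv_cons a w : tv g e (a :: w) = tv_letter g e a ++ tv g e w.
Proof. by []. Qed.

Lemma tv_cat u v : tv g e (u ++ v) = tv g e u ++ tv g e v.
Proof. by rewrite /tv map_cat flatten_cat. Qed.

Lemma tv_letter_linv a : tv_letter g e (linv a) = winv (tv_letter g e a).
Proof. by case: g e a => [] [] [[] []]. Qed.

Lemma tv_winv w : tv g e (winv w) = winv (tv g e w).
Proof.
elim: w => // a w IH.
by rewrite winv_cons -cats1 tv_cat IH tv_cons winv_cat /tv /= cats0 tv_letter_linv.
Qed.

Lemma reduce_tv w : reduce (tv g e (reduce w)) = reduce (tv g e w).
Proof.
elim: w => // a w IH; rewrite reduce_cons tv_cons -reduce_reducer -IH reduce_reducer -tv_cons.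
case: (reduce w) => [|b t] //=; case: eqP => [-> | _] //.
by rewrite !tv_cons tv_letter_linv (reduce_cancel_mid [::]).
Qed.

Lemma perm_cyc_red_tv w : perm_eq (cyc_red (tv g e w)) (cyc_red (tv g e (cyc_red w))).
Proof.
have [p ew _] := cyc_red_spec w.
have -> : cyc_red (tv g e w) = cyc_red (tv g e p ++ tv g e (cyc_red w) ++ winv (tv g e p)).
  by apply: cyc_red_congr; rewrite -reduce_tv ew !tv_cat tv_winv.
exact: perm_cyc_red_conj.
Qed.

Lemma perm_cyc_red_tv_rot k c : perm_eq (cyc_red (tv g e (rot k c))) (cyc_red (tv g e c)).
Proof.
have -> : tv g e c = tv g e (take k c) ++ tv g e (drop k c) by rewrite -tv_cat cat_take_drop.
rewrite /rot tv_cat; set A := tv g e (take k c); set B := tv g e (drop k c).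
have -> : cyc_red (A ++ B) = cyc_red (A ++ (B ++ A) ++ winv A).
  apply: cyc_red_congr.
  by rewrite -(cats0 (A ++ B)) -(reduce_cancel_mid (A ++ B) A [::]) !catA !cats0.
by rewrite perm_sym perm_cyc_red_conj.
Qed.

End Transvection.

(** * The reduced image of a reduced word *)

Fixpoint tv_red (g : gen) (e : bool) (c : word) : word :=
  match c with
  | [::] => [::]
  | a :: t =>
    if a == (g, false) then
      if t is b :: t' then
        (if b == (~~ g, ~~ e) then a :: tv_red g e t' else a :: (~~ g, e) :: tv_red g e t)
      else [:: a; (~~ g, e)]
    else if a == (g, true) then (~~ g, ~~ e) :: a :: tv_red g e t
    else if a == (~~ g, e) then
      if t is b :: t' then (if b == (g, true) then b :: tv_red g e t' else a :: tv_red g e t)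
      else [:: a]
    else a :: tv_red g e t
  end.

Lemma tv_red1 g e a : tv_red g e [:: a] =
  if a == (g, false) then [:: a; (~~ g, e)]
  else if a == (g, true) then [:: (~~ g, ~~ e); a] else [:: a].
Proof. by rewrite /=; do 3?case: ifP. Qed.

Lemma tv_red2 g e a b t : tv_red g e (a :: b :: t) =
  if a == (g, false) then
    (if b == (~~ g, ~~ e) then a :: tv_red g e t else a :: (~~ g, e) :: tv_red g e (b :: t))
  else if a == (g, true) then (~~ g, ~~ e) :: a :: tv_red g e (b :: t)
  else if a == (~~ g, e) then (if b == (g, true) then b :: tv_red g e t else a :: tv_red g e (b :: t))
  else a :: tv_red g e (b :: t).
Proof. by []. Qed.

Arguments tv_red : simpl never.

Lemma size_tv_red g e c :
  size (tv_red g e c) + 2 * npairs_seq (tv_cancels g e) c = size c + count (is_gen g) c.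
Proof.
case: g; case: e; elim/seq_ind2: c => [|a|a b t IHt IHbt] //;
  try (by rewrite tv_red1; case: a => [[] []]);
  rewrite tv_red2; move: IHt IHbt; case: t => [|y t];
  case: a => [[] []]; case: b => [[] []] /=; lia.
Qed.

Lemma count_tv_red g e c : count (is_gen g) (tv_red g e c) = count (is_gen g) c.
Proof.
case: g; case: e; elim/seq_ind2: c => [|a|a b t IHt IHbt] //;
  try (by rewrite tv_red1; case: a => [[] []]);
  rewrite tv_red2; move: IHt IHbt; case: t => [|y t];
  case: a => [[] []]; case: b => [[] []] /=; lia.
Qed.

Arguments reduce : simpl never.
Arguments tv : simpl never.

Lemma reduce_tv_red g e c : reduce (tv g e c) = reduce (tv_red g e c).
Proof.
case: g; case: e; elim/seq_ind2: c => [|a|a b t IHt IHbt] //;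
  try (by rewrite tv_red1 /tv /=; case: a => [[] []]);
  rewrite tv_red2 tv_cons; move: IHt IHbt; case: a => [[] []]; case: b => [[] []] => IHt IHbt;
  rewrite /tv_letter /=;
  repeat (match goal with |- reduce (?x :: _) = reduce (?x :: _) => apply: reduce_cons_congr end);
  try (by rewrite IHbt);
  rewrite tv_cons /tv_letter /= reduce_cancel2 //;
  repeat (match goal with |- reduce (?x :: _) = reduce (?x :: _) => apply: reduce_cons_congr end);
  by [].
Qed.

Definition tv_red_head (g : gen) (e : bool) (a : letter) (t : word) : letter :=
  if a == (g, false) then a else if a == (g, true) then (~~ g, ~~ e)
  else if (a == (~~ g, e)) && (ohead t == Some (g, true)) then (g, true) else a.

Lemma tv_red_cons g e a t : exists r, tv_red g e (a :: t) = tv_red_head g e a t :: r.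
Proof.
case: g e a t => [] [] [[] []] [|b t];
  rewrite ?tv_red1 ?tv_red2 /tv_red_head //=; try case: b => [[] []]; by eexists.
Qed.

Definition precedes_tv_red (g : gen) (e : bool) (z y : letter) : bool :=
  if y == (g, true) then nocancel z (~~ g, ~~ e)
  else if y == (~~ g, e) then nocancel z (~~ g, e) && nocancel z (g, true)
  else nocancel z y.

Lemma nocancel_tv_red_head g e z y t :
  precedes_tv_red g e z y -> nocancel z (tv_red_head g e y t).
Proof.
rewrite /precedes_tv_red /tv_red_head; case: g e y => [] [] [[] []] /=; try done;
  try case: (ohead t == _); try done; by case/andP.
Qed.

Lemma path_tv_red g e z s : reduced s ->
  (if s is y :: _ then precedes_tv_red g e z y else true) -> path nocancel z (tv_red g e s).
Proof.
elim/seq_ind2: s z => [|a|a b t IHt IHbt] z //.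
  by rewrite tv_red1 /precedes_tv_red; case: g e a z => [] [] [[] []] [[] []].
move=> rabt za; have zh := nocancel_tv_red_head (b :: t) za.
have rbt : reduced (b :: t) := path_sorted rabt.
have rt : reduced t := path_sorted rbt.
have ab : nocancel a b by case/andP: rabt.
move: zh ab rbt rt IHt IHbt {rabt za}; rewrite tv_red2 /tv_red_head.
case: t => [|y t]; case: g e a b => [] [] [[] []] [[] []] => //= zh ab rbt rt IHt IHbt;
  rewrite ?zh //=; try by apply: IHbt.
all: apply: IHt => //; move: rbt; clear; case: y => [[] []]; rewrite /precedes_tv_red /= => H;
  by [|case/andP: H].
Qed.

Lemma reduced_tv_red g e c : reduced c -> reduced (tv_red g e c).
Proof.
case: c => [|a t] // rc; have [r er] := tv_red_cons g e a t.
have : path nocancel (tv_red_head g e a t) (tv_red g e (a :: t)).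
  apply: path_tv_red => //; rewrite /tv_red_head /precedes_tv_red {rc r er}.
  by case: g e a => [] [] [[] []] //=; case: (ohead t == _).
by rewrite er /= => /andP[].
Qed.

Definition joins_without_cancel (g : gen) (e : bool) (c t : word) : bool :=
  if (c, t) is (a :: s, b :: _) then ~~ tv_cancels g e (last a s) b else true.

Lemma tv_red_cat g e c t :
  joins_without_cancel g e c t -> tv_red g e (c ++ t) = tv_red g e c ++ tv_red g e t.
Proof.
elim/seq_ind2: c => [|a|a b s IHs IHbs] //.
  case: t => [|y t]; first by rewrite !cats0.
  by rewrite /= tv_red2 tv_red1 /tv_cancels; case: g e a y => [] [] [[] []] [[] []].
move=> jt; have jbt : joins_without_cancel g e (b :: s) t := jt.
have jst : joins_without_cancel g e s t by case: s jbt {IHs IHbs jt}.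
rewrite !cat_cons !tv_red2 -cat_cons IHbs // IHs //.
by repeat case: ifP.
Qed.

Lemma rot_joins_without_cancel g e c : exists k, joins_without_cancel g e (rot k c) (rot k c).
Proof.
(* Start at a letter that cannot end a cancelling pair; if there is none, the last letter
   cannot begin one. *)
pose P (a : letter) := (a != (~~ g, ~~ e)) && (a != (g, true)).
have [Pc | nPc] := boolP (has P c).
  have kc : find P c < size c by rewrite -has_find.
  move: (find P c) kc (nth_find lx Pc) => k kc /andP[/negbTE P1 /negbTE P2].
  exists k; rewrite /rot (drop_nth lx kc) /joins_without_cancel cat_cons /=.
  by rewrite /tv_cancels P1 P2 !andbF.
exists 0; rewrite rot0; case: c nPc => [|z t] // nPc.
have /(hasPn nPc) := mem_last z t.
rewrite negb_and !negbK /joins_without_cancel /= /tv_cancels.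
by clear nPc P; case/orP => /eqP ->; case: g; case: e.
Qed.

Lemma cyclically_reduced_tv_red g e c : joins_without_cancel g e c c ->
  cyclically_reduced c -> cyclically_reduced (tv_red g e c).
Proof.
case: c => [|z t] // jc cc.
(* The junction in the middle of [tv_red (c ++ c) = tv_red c ++ tv_red c] is the cyclic one. *)
have rcc : reduced ((z :: t) ++ (z :: t)).
  move: cc; rewrite cyclically_reduced_cons /reduced cat_cons /= cat_path /= => /andP[-> ?].
  by rewrite /nocancel andbT.
have := reduced_tv_red g e rcc; rewrite tv_red_cat //.
have [r ->] := tv_red_cons g e z t.
by rewrite /reduced cat_cons /= cat_path /= /cyclically_reduced /= rcons_path => /and3P[-> ->].
Qed.

Lemma cyc_red_tv_spec g e w : exists2 c,
  perm_eq (cyc_red (tv g e w)) (tv_red g e c) &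
  perm_eq c (cyc_red w) /\
  npairs_seq (tv_cancels g e) c = npairs_cycle (tv_cancels g e) (cyc_red w).
Proof.
have [_ _ cc] := cyc_red_spec w; set c := cyc_red w in cc *.
have [k jk] := rot_joins_without_cancel g e c.
have ck : cyclically_reduced (rot k c) by rewrite /cyclically_reduced rot_cycle.
exists (rot k c).
  have tv_rot : cyc_red (tv g e (rot k c)) = tv_red g e (rot k c).
    apply: cyc_red_cyclic (cyclically_reduced_tv_red jk ck).
    by rewrite reduce_tv_red reduce_id // reduced_tv_red // cyclically_reduced_reduced.
  by rewrite -tv_rot (perm_trans (perm_cyc_red_tv g e w)) // perm_sym perm_cyc_red_tv_rot.
split; first by rewrite perm_rot.
rewrite -(npairs_cycle_rot _ k); case: (rot k c) jk => [|a s] // jk.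
by rewrite npairs_cycle_cons (negbTE jk) addn0.
Qed.

Lemma cnorm_tv g e w :
  cnorm (tv g e w) + 2 * npairs_cycle (tv_cancels g e) (cyc_red w) = cnorm w + nocc w g.
Proof.
have [c pc [pcw <-]] := cyc_red_tv_spec g e w.
by rewrite /cnorm (perm_size pc) size_tv_red (perm_size pcw) (permP pcw).
Qed.

Lemma nocc_tv g e w : nocc (tv g e w) g = nocc w g.
Proof.
have [c pc [pcw _]] := cyc_red_tv_spec g e w.
by rewrite /nocc (permP pc) count_tv_red (permP pcw).
Qed.

Definition pot (a : letter) : nat := (a == ly) || (a == lxi).

Lemma npairs_tv_cancels_inv a s : path nocancel a s ->
  npairs (tv_cancels gx true) a s + pot a = npairs (tv_cancels gy true) a s + pot (last a s).
Proof.
elim: s a => [|b s IH] a //= /andP[ab /IH].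
move: (last b s) ab => z; case: a => [[] []]; case: b => [[] []];
  rewrite /nocancel /pot /=; lia.
Qed.

Lemma npairs_cycle_tv_cancels_xy e c : cyclically_reduced c ->
  npairs_cycle (tv_cancels gx e) c = npairs_cycle (tv_cancels gy e) c.
Proof.
case: c => // a s; case: e => [cc | _] /=.
  by have := npairs_tv_cancels_inv cc; rewrite last_rcons; lia.
by apply: eq_npairs => b d; rewrite /tv_cancels; case: b => [[] []]; case: d => [[] []].
Qed.

(** * Occurrence counts along chains *)

Lemma cnorm_reduce w : cnorm (reduce w) = cnorm w.
Proof. by rewrite /cnorm cyc_red_reduce. Qed.

Lemma nocc_reduce w g : nocc (reduce w) g = nocc w g.
Proof. by rewrite /nocc cyc_red_reduce. Qed.

Lemma nocc_x_add_y w : nocc w gx + nocc w gy = cnorm w.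
Proof.
rewrite /nocc /cnorm -(count_predC (is_gen gx)); congr addn.
by apply: eq_count => -[[] []].
Qed.

Lemma nocc_sigma_x neg w : nocc (sigma_pm neg w) gx = nocc w gx.
Proof. by rewrite sigma_pmE nocc_reduce nocc_tv. Qed.

Lemma nocc_tau_y neg w : nocc (tau_pm neg w) gy = nocc w gy.
Proof. by rewrite tau_pmE nocc_reduce nocc_tv. Qed.

Lemma cnorm_sigma_tau neg w :
  cnorm (sigma_pm neg w) + nocc w gy = cnorm (tau_pm neg w) + nocc w gx.
Proof.
have := cnorm_tv gx neg w; have := cnorm_tv gy neg w.
have [_ _ /(npairs_cycle_tv_cancels_xy neg) ->] := cyc_red_spec w.
by rewrite sigma_pmE tau_pmE !cnorm_reduce; lia.
Qed.

Definition same_nocc (w1 w2 : word) : Prop :=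
  nocc w1 gx = nocc w2 gx /\ nocc w1 gy = nocc w2 gy.

Section SameNocc.

Variable neg : bool.

Lemma same_nocc_of_cnorm w1 w2 : cnorm w1 = cnorm w2 ->
  cnorm (sigma_pm neg w1) = cnorm (sigma_pm neg w2) ->
  cnorm (tau_pm neg w1) = cnorm (tau_pm neg w2) -> same_nocc w1 w2.
Proof.
have := cnorm_sigma_tau neg w1; have := cnorm_sigma_tau neg w2.
have := nocc_x_add_y w1; have := nocc_x_add_y w2.
by rewrite /same_nocc; lia.
Qed.

Lemma same_nocc_sigma w1 w2 : same_nocc w1 w2 ->
  cnorm (sigma_pm neg w1) = cnorm (sigma_pm neg w2) ->
  same_nocc (sigma_pm neg w1) (sigma_pm neg w2).
Proof.
have := nocc_x_add_y (sigma_pm neg w1); have := nocc_x_add_y (sigma_pm neg w2).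
by rewrite /same_nocc !nocc_sigma_x; lia.
Qed.

Lemma same_nocc_tau w1 w2 : same_nocc w1 w2 ->
  cnorm (tau_pm neg w1) = cnorm (tau_pm neg w2) ->
  same_nocc (tau_pm neg w1) (tau_pm neg w2).
Proof.
have := nocc_x_add_y (tau_pm neg w1); have := nocc_x_add_y (tau_pm neg w2).
by rewrite /same_nocc !nocc_tau_y; lia.
Qed.

End SameNocc.

Lemma same_nocc_iter (f : word -> word) n w1 w2 :
  (forall w1 w2, same_nocc w1 w2 -> cnorm (f w1) = cnorm (f w2) -> same_nocc (f w1) (f w2)) ->
  same_nocc w1 w2 ->
  (forall j, j < n -> cnorm (iter j.+1 f w1) = cnorm (iter j.+1 f w2)) ->
  same_nocc (iter n f w1) (iter n f w2).
Proof.
move=> fP w12; elim: n => //= n IH cn.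
by apply: fP (cn n _) => //; apply: IH => j /ltnW; apply: cn.
Qed.

Lemma apply_chain_rcons neg c l k w : apply_chain neg (rcons c (l, k)) w =
  iter k (tau_pm neg) (iter l (sigma_pm neg) (apply_chain neg c w)).
Proof. by rewrite /apply_chain foldl_rcons. Qed.

Lemma chain_len_rcons c l k : chain_len (rcons c (l, k)) = chain_len c + (l + k).
Proof. by rewrite /chain_len map_rcons sumn_rcons. Qed.

Theorem lemma2p4 (m : nat) (u v : word) :
  0 < m ->
  (forall (neg : bool) (c : seq (nat * nat)), chain_len c <= m ->
     cnorm (apply_chain neg c u) = cnorm (apply_chain neg c v)) ->
  forall (neg : bool) (c : seq (nat * nat)), chain_len c <= m ->
    nocc (apply_chain neg c u) gx = nocc (apply_chain neg c v) gx /\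
    nocc (apply_chain neg c u) gy = nocc (apply_chain neg c v) gy.
Proof.
move=> m_gt0 hyp neg c.
change (chain_len c <= m -> same_nocc (apply_chain neg c u) (apply_chain neg c v)).
elim/last_ind: c => [_ | c [l k] IHc].
  apply: (@same_nocc_of_cnorm neg (apply_chain neg [::] u) (apply_chain neg [::] v)).
  - exact: hyp neg [::] _.
  - exact: hyp neg [:: (1, 0)] m_gt0.
  - exact: hyp neg [:: (0, 1)] m_gt0.
rewrite chain_len_rcons => len; rewrite !apply_chain_rcons.
have cm : chain_len c <= m by apply: leq_trans len; apply: leq_addr.
apply: (@same_nocc_iter (tau_pm neg) k _ _ (@same_nocc_tau neg)) => [|j jk].
  apply: (@same_nocc_iter (sigma_pm neg) l _ _ (@same_nocc_sigma neg)) => [|j jl].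
    exact: IHc cm.
  by have := hyp neg (rcons c (j.+1, 0)); rewrite !apply_chain_rcons chain_len_rcons; apply; lia.
by have := hyp neg (rcons c (l, j.+1)); rewrite !apply_chain_rcons chain_len_rcons; apply; lia.
Qed.
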